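(* Let $q\ge2$ be even and $n\ge1$. There exists a code $\mathcal{C}\subseteq\Sigma_q^n$ capable of correcting a reverse-complement duplication of arbitrary length (i.e. $RC_k^1(\boldsymbol{x})\cap RC_k^1(\boldsymbol{z})=\varnothing$ for all distinct $\boldsymbol{x},\boldsymbol{z}\in\mathcal{C}$ and all $k\ge1$) with at most $3\log_q n$ redundant symbols, i.e. $n-\log_q|\mathcal{C}|\le 3\log_q n$.
   Context: $\Sigma_q=\{0,\dots,q-1\}$. A complement operation is a fixed bijection $a\mapsto\overline{a}$ on $\Sigma_q$ with $\overline{a}\ne a$, $\overline{\overline{a}}=a$; $\boldsymbol{v}^{RC}=\overline{v_k}\cdots\overline{v_1}$ for $\boldsymbol{v}=v_1\cdots v_k$. For $\boldsymbol{x}=\boldsymbol{u}\boldsymbol{v}\boldsymbol{w}\in\Sigma_q^n$ with $|\boldsymbol{u}|=i-1$, $|\boldsymbol{v}|=k$, $RC_{k,i}(\boldsymbol{x})=\boldsymbol{u}\boldsymbol{v}\boldsymbol{v}^{RC}\boldsymbol{w}$, and $RC_k^1(\boldsymbol{x})=\{RC_{k,i}(\boldsymbol{x}):i\in[1,n-k+1]\}$ (empty if $k>n$). *)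

From mathcomp Require Import all_boot all_order all_algebra.
From mathcomp Require Import reals exp.
Set Implicit Arguments. Unset Strict Implicit. Unset Printing Implicit Defensive.

Definition is_complement (q : nat) (c : 'I_q -> 'I_q) : Prop :=
  (forall a, c a != a) /\ (forall a, c (c a) = a).

Definition revcomp (q : nat) (c : 'I_q -> 'I_q) (v : seq 'I_q) : seq 'I_q :=
  rev (map c v).

(* RC_{k,i}(x) = u v v^RC w with |u| = i-1, |v| = k  (i is 1-based) *)
Definition RC_dup (q : nat) (c : 'I_q -> 'I_q) (k i : nat) (x : seq 'I_q)
  : seq 'I_q :=
  let u := take i.-1 x in
  let v := take k (drop i.-1 x) in
  let w := drop (i.-1 + k) x in
  u ++ v ++ revcomp c v ++ w.

Definition in_RC1 (q : nat) (c : 'I_q -> 'I_q) (k : nat) (x y : seq 'I_q)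
  : Prop :=
  exists i : nat, [/\ 1 <= i, i <= size x - k + 1, k <= size x &
                      y = RC_dup c k i x].

From mathcomp Require Import all_boot all_order all_algebra.
From mathcomp Require Import reals exp.
From mathcomp Require Import zify.
Import Order.TTheory GRing.Theory Num.Theory.

(* A Gilbert-Varshamov (greedy) argument.  If RC_{k,i}(x) = RC_{k,j}(z) = y,
   then deleting the inserted block v^RC from y at position j recovers z, so
   z = del_{k,j}(RC_{k,i}(x)) is determined by (k, i, j) in [1, n]^3.  Hence
   every word is confusable with at most n^3 words (itself included), and
   greedily picking words and discarding their neighbours leaves a code of
   size at least q^n / n^3. *)

Section GreedyCode.

Context {T : finType} {P : T -> T -> Prop} {N : T -> {set T}} {D : nat}.
Hypotheses (N_refl : forall x, x \in N x) (card_N : forall x, #|N x| <= D).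
Hypotheses (P_N : forall x z, P x z -> z \in N x) (P_sym : forall x z, P x z -> P z x).

Lemma greedy_code (S : {set T}) :
  exists C : {set T},
    [/\ C \subset S, #|S| <= #|C| * D & {in C &, forall x z, x != z -> ~ P x z}].
Proof.
have [m] := ubnP #|S|; elim: m S => [|m IH] S // S_lt.
have [->|[x xS]] := set_0Vmem S.
  by exists set0; rewrite sub0set cards0; split=> // ?; rewrite inE.
have S'_lt : #|S :\: N x| < m.
  rewrite ltnS in S_lt; apply: leq_trans S_lt.
  apply/proper_card/properP; split; first exact: subsetDl.
  by exists x; rewrite // inE N_refl.
have [C' [C'_sub C'_card C'_code]] := IH _ S'_lt.
have C'_N x' : x' \in C' -> x' \notin N x.
  by move=> /(subsetP C'_sub); rewrite inE => /andP[].
have xC' : x \notin C' by apply: contraL (N_refl x); apply: C'_N.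
exists (x |: C'); split.
- by rewrite subUset sub1set xS (subset_trans C'_sub) ?subsetDl.
- rewrite cardsU1 xC' mulSn -(cardsID (N x) S) leq_add //.
  exact/(leq_trans _ (card_N x))/subset_leq_card/subsetIr.
- move=> a b; rewrite !inE => /predU1P[->|aC'] /predU1P[->|bC']; rewrite ?eqxx //.
  + by move=> _ /P_N; apply/negP/C'_N.
  + by move=> _ /P_sym/P_N; apply/negP/C'_N.
  + exact: C'_code.
Qed.

End GreedyCode.

Definition del_block {T : Type} (k j : nat) (y : seq T) : seq T :=
  take (j.-1 + k) y ++ drop (j.-1 + k + k) y.

Section ReverseComplementDuplication.

Context {q : nat} (c : 'I_q -> 'I_q).

Lemma RC_dupK k j (s : seq 'I_q) :
  j.-1 + k <= size s -> del_block k j (RC_dup c k j s) = s.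
Proof.
move=> fits; rewrite /del_block /RC_dup.
set u := take j.-1 s; set v := take k (drop j.-1 s).
have size_uv : size (u ++ v) = j.-1 + k.
  by rewrite size_cat !size_takel ?size_drop //; lia.
have size_rc : size (revcomp c v) = k.
  by rewrite size_rev size_map size_takel // size_drop; lia.
rewrite catA take_size_cat // -size_uv -size_rc addnC -drop_drop.
rewrite drop_size_cat // drop_size_cat // size_uv.
by rewrite -catA addnC -drop_drop !cat_take_drop.
Qed.

Lemma in_RC1_del_block k (z y : seq 'I_q) :
  in_RC1 c k z y -> exists2 j, 0 < j <= size z - k + 1 & del_block k j y = z.
Proof.
case=> j [j_gt0 j_le k_le ->]; exists j; first by rewrite j_gt0.
by rewrite RC_dupK //; lia.
Qed.

Definition confusable (x z : seq 'I_q) :=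
  exists2 k, 0 < k & exists y, in_RC1 c k x y /\ in_RC1 c k z y.

Lemma confusable_sym x z : confusable x z -> confusable z x.
Proof. by case=> k k_gt0 [y [xy zy]]; exists k => //; exists y. Qed.

Lemma confusable_refl x : 0 < size x -> confusable x x.
Proof.
move=> x_gt0; have x_dup : in_RC1 c 1 x (RC_dup c 1 1 x).
  by exists 1; split=> //; lia.
by exists 1 => //; exists (RC_dup c 1 1 x).
Qed.

Context {n : nat}.

Definition rc_ball (x : n.-tuple 'I_q) : {set n.-tuple 'I_q} :=
  [set insubd x (del_block t.1.1.+1 t.2.+1 (RC_dup c t.1.1.+1 t.1.2.+1 x))
  | t : 'I_n * 'I_n * 'I_n].

Lemma card_rc_ball x : #|rc_ball x| <= n ^ 3.
Proof.
apply: leq_trans (leq_imset_card _ _) _.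
by rewrite !card_prod !card_ord; lia.
Qed.

Lemma confusable_rc_ball (x z : n.-tuple 'I_q) : confusable x z -> z \in rc_ball x.
Proof.
case=> k k_gt0 [y [[i [i_gt0 i_le k_le y_def]] /in_RC1_del_block[j /andP[j_gt0 j_le] z_def]]].
rewrite size_tuple in i_le k_le; rewrite size_tuple in j_le.
have k_lt : k.-1 < n by lia.
have i_lt : i.-1 < n by lia.
have j_lt : j.-1 < n by lia.
apply/imsetP; exists (Ordinal k_lt, Ordinal i_lt, Ordinal j_lt) => //=.
by apply: val_inj; rewrite !prednK // val_insubd -y_def z_def size_tuple eqxx.
Qed.

Lemma rc_ball_id x : 0 < n -> x \in rc_ball x.
Proof. by move=> n_gt0; apply/confusable_rc_ball/confusable_refl; rewrite size_tuple. Qed.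

End ReverseComplementDuplication.

Lemma redundancy_le_logq (R : realType) {q n m b : nat} :
  1 < q -> 0 < m -> 0 < b -> q ^ n <= m * b ->
  (n%:R - ln (m%:R : R) / ln q%:R <= ln (b%:R : R) / ln q%:R)%R.
Proof.
move=> q_gt1 m_gt0 b_gt0 qn_le.
have pos k : 0 < k -> (k%:R : R)%R \is Num.pos by rewrite posrE ltr0n.
have lnq_gt0 : (0 < ln (q%:R : R))%R by apply: ln_gt0; rewrite ltr1n.
rewrite lerBlDl -mulrDl ler_pdivlMr // mulr_natl -lnXn -?natrX ?ltr0n; last lia.
rewrite -lnM ?pos // -natrM ler_ln ?pos ?ler_nat ?muln_gt0 ?m_gt0 ?b_gt0 //.
by rewrite expn_gt0; lia.
Qed.

Theorem lemma7 (R : realType) (q n : nat) (c : 'I_q -> 'I_q) :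
  2 <= q -> ~~ odd q -> 1 <= n -> is_complement c ->
  exists C : {set n.-tuple 'I_q},
    [/\ 0 < #|C|,
        (forall (x z : n.-tuple 'I_q), x \in C -> z \in C -> x != z ->
           forall k : nat, 1 <= k ->
           forall y : seq 'I_q, ~ (in_RC1 c k x y /\ in_RC1 c k z y)) &
        (((n%:R : R) - ln (#|C|%:R) / ln (q%:R) <= 3 * (ln (n%:R) / ln (q%:R)))%R)].
Proof.
move=> q_gt1 _ n_gt0 _.
have [C [_ C_cover C_code]] := greedy_code (rc_ball_id c ^~ n_gt0) (@card_rc_ball _ c n)
  (@confusable_rc_ball _ c n) (confusable_sym c) [set: n.-tuple 'I_q].
rewrite cardsT card_tuple card_ord in C_cover.
have C_gt0 : 0 < #|C|.
  by rewrite lt0n; apply: contraTneq C_cover => ->; rewrite -ltnNge expn_gt0; lia.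
exists C; split=> // [x z xC zC xz k k_gt0 y xzy|].
  by apply: (C_code x z xC zC xz); exists k => //; exists y.
have := redundancy_le_logq R q_gt1 C_gt0 _ C_cover.
rewrite [(n ^ 3)%:R%R]natrX lnXn ?ltr0n // mulrA mulr_natl; apply; rewrite expn_gt0; lia.
Qed.
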